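(* Let $\Lambda$ be a unital commutative ring, $q$ a non-negative integer and $\mathfrak m$ a Lie algebra over $\Lambda$. Then the sequence of Lie algebras $0\to Z_q(\mathfrak m)\to\mathfrak m\xrightarrow{\partial}\operatorname{IDer}(\mathfrak m,q)\to0$ is exact, where $\partial(m)=(d_m,qm)$, and $\partial$ is a $q$-crossed $\operatorname{IDer}(\mathfrak m,q)$-module with respect to the Lie action of $\operatorname{IDer}(\mathfrak m,q)$ on $\mathfrak m$ given by ${}^{(d_m,qm)}m'=[m,m']$.
   Context: All Lie algebras are over $\Lambda$. $Z_q(\mathfrak m)=\{e\in Z(\mathfrak m)\mid qe=0\}$, where $Z(\mathfrak m)$ is the center. $\operatorname{Der}(\mathfrak m)$ is the Lie algebra of derivations of $\mathfrak m$ with bracket $[d,d']=dd'-d'd$; $d_m$ denotes the inner derivation $d_m(m')=[m,m']$. The Lie algebra $\operatorname{Der}(\mathfrak m)\times q\mathfrak m$ has bracket $[(d,qm),(d',qm')]=([d,d'],q[m,m'])$, and $\operatorname{IDer}(\mathfrak m,q)=\{(d_m,qm)\mid m\in\mathfrak m\}$ is its Lie subalgebra of inner $q$-derivations. A Lie action of $\mathfrak g$ on $\mathfrak k$ is a $\Lambda$-bilinear map $(g,k)\mapsto{}^gk$ with ${}^{[g,g']}k={}^g({}^{g'}k)-{}^{g'}({}^gk)$ and ${}^g[k,k']=[{}^gk,k']+[k,{}^gk']$. A $q$-crossed $\mathfrak g$-module is a Lie homomorphism $\mu\colon\mathfrak k\to\mathfrak g$ together with a Lie action of $\mathfrak g$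 on $\mathfrak k$ such that $\mu({}^gk)=[g,\mu(k)]$ and ${}^{\mu(k)}k'=[k,k']$ for all $g\in\mathfrak g$, $k,k'\in\mathfrak k$, and $qk=0$ for all $k\in\operatorname{Ker}\mu$. *)

From HB Require Import structures.
From mathcomp Require Import all_boot all_algebra.
Set Implicit Arguments. Unset Strict Implicit. Unset Printing Implicit Defensive.
Import GRing.Theory.
Local Open Scope ring_scope.

Section LieDefs.
Variables (R : comPzRingType) (M : lmodType R).

Record lie_bracket (br : M -> M -> M) : Prop := {
  br_linl : forall (a : R) x y z, br (a *: x + y) z = a *: br x z + br y z;
  br_linr : forall (a : R) x y z, br x (a *: y + z) = a *: br x y + br x z;
  br_alt : forall x, br x x = 0;
  br_jacobi : forall x y z, br x (br y z) + br y (br z x) + br z (br x y) = 0 }.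

Definition Zq (br : M -> M -> M) (q : nat) (e : M) : Prop :=
  (forall m, br e m = 0) /\ e *+ q = 0.

Definition derivation (br : M -> M -> M) (d : M -> M) : Prop :=
  (forall (a : R) x y, d (a *: x + y) = a *: d x + d y) /\
  (forall x y, d (br x y) = br (d x) y + br x (d y)).

(* elements of Der(m) x q m are represented as pairs (d, x) *)
Definition elt := ((M -> M) * M)%type.

Definition in_Der_qm (br : M -> M -> M) (q : nat) (g : elt) : Prop :=
  derivation br g.1 /\ exists m, g.2 = m *+ q.

Definition dinner (br : M -> M -> M) (m : M) : M -> M := fun m' => br m m'.

Definition IDer (br : M -> M -> M) (q : nat) (g : elt) : Prop :=
  exists m, g = (dinner br m, m *+ q).

Definition qpartial (br : M -> M -> M) (q : nat) (m : M) : elt :=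
  (dinner br m, m *+ q).

Definition dcomm (d d' : M -> M) : M -> M := fun x => d (d' x) - d' (d x).

(* bracket of Der(m) x q m: [(d, qm), (d', qm')] = ([d, d'], q [m, m']);
   stated as a relation "h = [g, g']" (it is well defined on q m). *)
Definition dq_bracket (br : M -> M -> M) (q : nat) (g g' h : elt) : Prop :=
  h.1 = dcomm g.1 g'.1 /\
  exists m m', [/\ g.2 = m *+ q, g'.2 = m' *+ q & h.2 = (br m m') *+ q].

Definition eadd (g g' : elt) : elt := (fun x => g.1 x + g'.1 x, g.2 + g'.2).
Definition escale (a : R) (g : elt) : elt := (fun x => a *: g.1 x, a *: g.2).
Definition ezero : elt := (fun _ => 0, 0).

(* the action of IDer(m,q) on m: ^{(d_m, q m)} m' = [m, m'] = d_m m' *)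
Definition ider_act (g : elt) (k : M) : M := g.1 k.

Definition lie_hom_to (br : M -> M -> M) (gbr : elt -> elt -> elt -> Prop)
    (mu : M -> elt) : Prop :=
  (forall (a : R) k k', mu (a *: k + k') = eadd (escale a (mu k)) (mu k')) /\
  (forall k k', gbr (mu k) (mu k') (mu (br k k'))).

Definition lie_action (br : M -> M -> M) (G : elt -> Prop)
    (gbr : elt -> elt -> elt -> Prop) (act : elt -> M -> M) : Prop :=
  [/\ (forall (a : R) g g' k, G g -> G g' ->
          act (eadd (escale a g) g') k = a *: act g k + act g' k),
      (forall (a : R) g k k', G g -> act g (a *: k + k') = a *: act g k + act g k'),
      (forall g g' h k, G g -> G g' -> gbr g g' h ->
          act h k = act g (act g' k) - act g' (act g k))
    & (forall g k k', G g -> act g (br k k') = br (act g k) k' + br k (act g k'))].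

Definition q_crossed_module (br : M -> M -> M) (q : nat) (G : elt -> Prop)
    (gbr : elt -> elt -> elt -> Prop) (act : elt -> M -> M) (mu : M -> elt) : Prop :=
  (forall k, G (mu k)) /\
  [/\ lie_hom_to br gbr mu,
      lie_action br G gbr act,
      (forall g k, G g -> gbr g (mu k) (mu (act g k))),
      (forall k k', act (mu k) k' = br k k')
    & (forall k, mu k = ezero -> k *+ q = 0)].

End LieDefs.

(* The Jacobi identity, read as [m, [x, y]] = [[m, x], y] + [x, [m, y]], says
   that every d_m is a derivation, and read as [[m, m'], x] = d_m d_m' x - d_m' d_m x
   that m |-> d_m, and hence m |-> (d_m, q m), preserves brackets.  The kernel of
   this map is Z_q(m) because d_m = 0 exactly when m is central, and the crossed
   module identities reduce to d_m m' = [m, m'] and to the same two readings of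
   Jacobi. *)
From HB Require Import structures.
From mathcomp Require Import all_boot all_algebra.
From Stdlib Require Import FunctionalExtensionality.
Import GRing.Theory.
Local Open Scope ring_scope.

Set Implicit Arguments.

Section LieBracketAlgebra.
Variables (R : comPzRingType) (M : lmodType R) (br : M -> M -> M).
Hypothesis Lbr : lie_bracket br.

Lemma brDl x y z : br (x + y) z = br x z + br y z.
Proof. by rewrite -[x]scale1r (br_linl Lbr) !scale1r. Qed.

Lemma brDr x y z : br x (y + z) = br x y + br x z.
Proof. by rewrite -[y]scale1r (br_linr Lbr) !scale1r. Qed.

Lemma br0r x : br x 0 = 0.
Proof. by apply: (addIr (br x 0)); rewrite -brDr !addr0 add0r. Qed.

Lemma brNr x y : br x (- y) = - br x y.
Proof. by apply: (addIr (br x y)); rewrite -brDr !addNr br0r. Qed.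

Lemma brC x y : br x y = - br y x.
Proof.
have := br_alt Lbr (x + y).
rewrite brDl !brDr !(br_alt Lbr) add0r addr0 => /eqP.
by rewrite addr_eq0 => /eqP.
Qed.

Lemma br_leibniz x y z : br x (br y z) = br (br x y) z + br y (br x z).
Proof.
have J := br_jacobi Lbr x y z.
have Ez : br z (br x y) = - (br x (br y z) + br y (br z x)).
  by apply/eqP; rewrite -addr_eq0 addrC J.
by rewrite (brC (br x y) z) Ez opprK (brC z x) brNr addrNK.
Qed.

Lemma dinner_derivation m : derivation br (dinner br m).
Proof. by split=> [a x y | x y]; [exact: (br_linr Lbr) | exact: br_leibniz]. Qed.

Lemma dcomm_dinner x y : dcomm (dinner br x) (dinner br y) = dinner br (br x y).
Proof.
by apply: functional_extensionality => z; rewrite /dcomm /dinner br_leibniz addrK.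
Qed.

Variable q : nat.

Lemma qpartial_br k k' :
  dq_bracket br q (qpartial br q k) (qpartial br q k') (qpartial br q (br k k')).
Proof. by split; [rewrite dcomm_dinner | exists k, k']. Qed.

Lemma IDer_sub_Der_qm g : IDer br q g -> in_Der_qm br q g.
Proof. by case=> m ->; split; [exact: dinner_derivation | exists m]. Qed.

Lemma qpartial_eq0 m : qpartial br q m = ezero M <-> Zq br q m.
Proof.
split=> [[dm0 qm0] | [mZ qm0]].
  by split=> // m'; have := congr1 (fun d => d m') dm0.
by rewrite /qpartial /ezero qm0; congr pair; exact: functional_extensionality.
Qed.

Lemma qpartial_onto g : IDer br q g -> exists m, qpartial br q m = g.
Proof. by case=> m ->; exists m. Qed.

Lemma qpartial_lie_hom : lie_hom_to br (dq_bracket br q) (qpartial br q).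
Proof.
split=> [a k k' | k k']; last exact: qpartial_br.
rewrite /qpartial /eadd /escale /=; congr pair; last by rewrite mulrnDl scalerMnr.
by apply: functional_extensionality => x; rewrite /dinner (br_linl Lbr).
Qed.

Lemma ider_lie_action : lie_action br (IDer br q) (dq_bracket br q) (@ider_act R M).
Proof.
split=> //.
- by move=> a g k k' [m ->]; exact: (br_linr Lbr).
- by move=> g g' h k _ _ [E _]; rewrite /ider_act E.
- by move=> g k k' [m ->]; exact: br_leibniz.
Qed.

Lemma qpartial_crossed_module :
  q_crossed_module br q (IDer br q) (dq_bracket br q) (@ider_act R M) (qpartial br q).
Proof.
split; first by move=> k; exists k.
split=> //.
- exact: qpartial_lie_hom.
- exact: ider_lie_action.
- by move=> g k [m ->]; exact: qpartial_br.
- by move=> k /qpartial_eq0 [].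
Qed.

End LieBracketAlgebra.

Theorem proposition4p2 (R : comPzRingType) (M : lmodType R)
    (br : M -> M -> M) (q : nat) :
  lie_bracket br ->
  (* IDer(m,q) sits inside Der(m) x q m *)
  (forall g, IDer br q g -> in_Der_qm br q g) /\
  (* exactness of 0 -> Z_q(m) -> m -> IDer(m,q) -> 0 *)
  (forall m, qpartial br q m = ezero M <-> Zq br q m) /\
  (forall g, IDer br q g -> exists m, qpartial br q m = g) /\
  (* partial is a q-crossed IDer(m,q)-module *)
  q_crossed_module br q (IDer br q) (dq_bracket br q) (@ider_act R M) (qpartial br q).
Proof.
move=> Lbr; split; first exact: IDer_sub_Der_qm.
split; first exact: qpartial_eq0.
split; first exact: qpartial_onto.
exact: qpartial_crossed_module.
Qed.
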